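(* Let $a$ be a positive integer and let $\alpha,\beta$ be $\tilde{\mathbb N}$-compositions. Then $$\varphi\big(M_{(a,\alpha*\beta)}\big)=(-1)^{\ell_\varepsilon(\alpha)+\ell_\varepsilon(\beta)}M_{(a,\bar\alpha*\bar\beta)}.$$
   Context: $\tilde{\mathbb N}=\mathbb N\cup\{\varepsilon\}$ with $0+\varepsilon=\varepsilon+\varepsilon=\varepsilon$ and $n+\varepsilon=n$ for integers $n\ge1$. $\mathbf{k}$ is a commutative ring containing $\mathbb Q$; $\mathbf{k}[[X]]_{\tilde{\mathbb N}}$, $X=\{x_1<x_2<\cdots\}$, is the algebra of possibly infinite linear combinations of formal monomials $\prod x_i^{f(x_i)}$ with $f$ finitely supported $\tilde{\mathbb N}$-valued, multiplied by adding exponents. An $\tilde{\mathbb N}$-composition is a finite (possibly empty) sequence of elements of $\{\varepsilon,1,2,\dots\}$; $M_{(\alpha_1,\dots,\alpha_k)}=\sum_{1\le i_1<\cdots<i_k}x_{i_1}^{\alpha_1}\cdots x_{i_k}^{\alpha_k}$, $M_\emptyset=1$, and $\mathrm{WCQSym}$ is their (free) $\mathbf k$-span; $\mathrm{QSym}$ is the span of $M_\alpha$ with all entries positive integers. The quasi-shuffle product $*$ on formal linear combinations of $\tilde{\mathbb N}$-compositions is bilinear with $\emptyset*\gamma=\gamma*\emptyset=\gamma$ and $(c,\gamma)*(d,\delta)=(c,\gamma*(d,\delta))+(d,(c,\gamma)*\delta)+(c+d,\gamma*\delta)$; $M$ is extended linearly, and $(a,\cdot)$ (prepending $a$) is extended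 linearly. $\ell_\varepsilon(\alpha)$ is the number of entries equal to $\varepsilon$, $\bar\alpha$ is $\alpha$ with its $\varepsilon$ entries deleted. $\mathcal C_\varepsilon$ is the set of $\tilde{\mathbb N}$-compositions with first entry $\varepsilon$, $\mathcal C_N$ the set of all others. $\varphi:\mathrm{WCQSym}\to\mathrm{QSym}$ is the $\mathbf k$-linear map with $\varphi(M_\gamma)=(-1)^{\ell_\varepsilon(\gamma)}M_{\bar\gamma}$ for $\gamma\in\mathcal C_N$ and $\varphi(M_\gamma)=0$ for $\gamma\in\mathcal C_\varepsilon$. *)

From mathcomp Require Import all_boot all_algebra.
Set Implicit Arguments. Unset Strict Implicit. Unset Printing Implicit Defensive.
Import GRing.Theory.
Local Open Scope ring_scope.

(* Encoding of \tilde N-compositions: an entry is a nat, where 0 encodes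
   epsilon and n >= 1 encodes the positive integer n.  With this encoding the
   addition of \tilde N (restricted to {eps,1,2,...}) is exactly addn:
   eps+eps=eps, n+eps=n, n+m=n+m. *)
Definition eps : nat := 0%N.
Definition ncomp := seq nat.

Definition leps (al : ncomp) : nat := count (fun x => x == eps) al.
Definition cbar (al : ncomp) : ncomp := filter (fun x => x != eps) al.

Definition in_Ceps (al : ncomp) : bool :=
  if al is x :: _ then x == eps else false.

(* quasi-shuffle of two compositions, as a multiset (list) of compositions,
   each with coefficient 1 *)
Fixpoint qsh (s t : ncomp) {struct s} : seq ncomp :=
  match s with
  | [::] => [:: t]
  | c :: s' =>
    let fix qsh_s (t : ncomp) : seq ncomp :=
      match t with
      | [::] => [:: s]
      | d :: t' =>
          [seq c :: u | u <- qsh s' t] ++ [seq d :: u | u <- qsh_s t']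
          ++ [seq (c + d)%N :: u | u <- qsh s' t']
      end
    in qsh_s t
  end.

(* Formal k-linear combinations of compositions, i.e. elements
   sum_i c_i M_{gamma_i} of WCQSym (the M_gamma form a basis). *)
Definition lc (k : Type) := seq (k * ncomp).

Definition coef (k : nmodType) (u : lc k) (g : ncomp) : k :=
  \sum_(p <- u | p.2 == g) p.1.

(* M_{(a, alpha * beta)} : quasi-shuffle, then prepend a (linearly) *)
Definition M_prepend_qsh (k : pzSemiRingType) (a : nat) (al be : ncomp) : lc k :=
  [seq (1, a :: g) | g <- qsh al be].

Definition phi_basis (k : pzRingType) (g : ncomp) : lc k :=
  if in_Ceps g then [::] else [:: ((-1) ^+ leps g, cbar g)].

Definition phi (k : pzRingType) (u : lc k) : lc k :=
  flatten [seq [seq (p.1 * q.1, q.2) | q <- phi_basis k p.2] | p <- u].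

Definition lc_scale (k : pzRingType) (c : k) (u : lc k) : lc k :=
  [seq (c * p.1, p.2) | p <- u].

From mathcomp Require Import all_boot all_algebra ring.
Import GRing.Theory.
Set Implicit Arguments. Unset Strict Implicit. Unset Printing Implicit Defensive.
Local Open Scope ring_scope.

(* Since [a > 0], no term of [(a, alpha * beta)] lies in [C_eps], so [phi] acts
   on it as the signed deletion [gamma |-> (-1)^(l_eps gamma) gamma-bar], and it
   suffices to show that signed deletion turns [alpha * beta] into
   [(-1)^(l_eps alpha + l_eps beta) (alpha-bar * beta-bar)].  If [alpha = (eps, alpha')]
   and [beta = (d, beta')], the term [(d, (eps, alpha') * beta')] carries, by
   induction, one sign more than the merged term [(eps + d, alpha' * beta')],
   and [eps + d = d]: the two cancel, leaving exactly the terms of the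
   quasi-shuffle of the barred compositions. *)

Lemma qsh_nil_r (s : ncomp) : qsh s [::] = [:: s].
Proof. by case: s. Qed.

Lemma qsh_cons (c d : nat) (s t : ncomp) :
  qsh (c :: s) (d :: t) =
  [seq c :: u | u <- qsh s (d :: t)] ++ [seq d :: u | u <- qsh (c :: s) t]
  ++ [seq (c + d)%N :: u | u <- qsh s t].
Proof. by []. Qed.

Lemma leps_cons_eps (s : ncomp) : leps (eps :: s) = (leps s).+1.
Proof. by []. Qed.

Lemma cbar_cons_eps (s : ncomp) : cbar (eps :: s) = cbar s.
Proof. by []. Qed.

Lemma leps_cons (c : nat) (s : ncomp) : c != eps -> leps (c :: s) = leps s.
Proof. by rewrite /leps /= => /negbTE ->. Qed.

Lemma cbar_cons (c : nat) (s : ncomp) : c != eps -> cbar (c :: s) = c :: cbar s.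
Proof. by rewrite /cbar /= => ->. Qed.

Section SignedDeletion.
Variable R : comPzRingType.
Implicit Types (L : seq ncomp) (f : ncomp -> R).

Definition signed_cbar_sum L f : R :=
  \sum_(g <- L) (-1) ^+ leps g * f (cbar g).

Lemma signed_cbar_sum_cat L1 L2 f :
  signed_cbar_sum (L1 ++ L2) f = signed_cbar_sum L1 f + signed_cbar_sum L2 f.
Proof. exact: big_cat. Qed.

Lemma signed_cbar_sum_cons_eps L f :
  signed_cbar_sum [seq eps :: u | u <- L] f = - signed_cbar_sum L f.
Proof.
rewrite /signed_cbar_sum big_map -sumrN; apply: eq_bigr => u _.
by rewrite leps_cons_eps cbar_cons_eps exprS mulN1r mulNr.
Qed.

Lemma signed_cbar_sum_cons c L f : c != eps ->
  signed_cbar_sum [seq c :: u | u <- L] f =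
  signed_cbar_sum L (fun u => f (c :: u)).
Proof.
move=> c_eps; rewrite /signed_cbar_sum big_map; apply: eq_bigr => u _.
by rewrite leps_cons // cbar_cons.
Qed.

Lemma signed_cbar_sum_qsh s t f :
  signed_cbar_sum (qsh s t) f =
  (-1) ^+ (leps s + leps t) * \sum_(g <- qsh (cbar s) (cbar t)) f g.
Proof.
elim: s t f => [|c s IHs] t f.
  by rewrite /signed_cbar_sum !big_seq1.
elim: t f => [|d t IHt] f.
  by rewrite !qsh_nil_r /signed_cbar_sum !big_seq1 addn0.
rewrite qsh_cons !signed_cbar_sum_cat.
case: (eqVneq c eps) IHt => [-> | c_eps] IHt; have [-> | d_eps] := eqVneq d eps.
- rewrite addn0 !signed_cbar_sum_cons_eps IHs IHt IHs.
  rewrite !leps_cons_eps !cbar_cons_eps !addnS !addSn !exprS; ring.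
- rewrite add0n signed_cbar_sum_cons_eps !signed_cbar_sum_cons //.
  rewrite IHs IHt IHs !leps_cons_eps cbar_cons_eps leps_cons // cbar_cons //.
  rewrite !addSn !exprS; ring.
- rewrite addn0 signed_cbar_sum_cons_eps !signed_cbar_sum_cons //.
  rewrite IHs IHt IHs !leps_cons_eps cbar_cons_eps leps_cons // cbar_cons //.
  rewrite !addnS !exprS; ring.
- have cd_eps : (c + d)%N != eps by rewrite addn_eq0 negb_and c_eps.
  rewrite !signed_cbar_sum_cons // IHs IHt IHs !leps_cons // !cbar_cons //.
  by rewrite qsh_cons !big_cat !big_map /= !mulrDr.
Qed.

End SignedDeletion.

Section Coefficients.
Variable k : pzRingType.
Implicit Types (u : lc k) (g h : ncomp).

Lemma coef_scale (c : k) u h : coef (lc_scale c u) h = c * coef u h.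
Proof. by rewrite /coef big_map mulr_sumr. Qed.

Lemma coef_phi u h :
  coef (phi u) h =
  \sum_(p <- u | ~~ in_Ceps p.2 && (cbar p.2 == h)) p.1 * (-1) ^+ leps p.2.
Proof.
rewrite /coef big_flatten big_map [RHS]big_mkcond; apply: eq_bigr => -[x g] _ /=.
rewrite big_map /phi_basis /=; case: (in_Ceps g); first by rewrite big_nil.
by rewrite big_cons big_nil addr0 /=; case: eqP.
Qed.

End Coefficients.

Theorem lemma3p5 (k : comUnitRingType)
  (hQ : forall n : nat, (n.+1)%:R \is a @GRing.unit k)
  (a : nat) (ha : (0 < a)%N) (al be : ncomp) :
  coef (phi (M_prepend_qsh k a al be)) =1
  coef (lc_scale ((-1) ^+ (leps al + leps be)) (M_prepend_qsh k a (cbar al) (cbar be))).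
Proof.
move=> h; have a_eps : a != eps by rewrite -lt0n.
rewrite coef_phi coef_scale /coef /M_prepend_qsh !big_map /= big_mkcond /=.
have -> : \sum_(g <- qsh al be)
    (if ~~ in_Ceps (a :: g) && (cbar (a :: g) == h)
     then 1 * (-1) ^+ leps (a :: g) else 0) =
  signed_cbar_sum (qsh al be) (fun u => ((a :: u) == h)%:R :> k).
  apply: eq_bigr => g _; rewrite leps_cons // cbar_cons // /= (negbTE a_eps).
  by case: eqP; rewrite ?mul1r ?mulr1 ?mulr0.
rewrite signed_cbar_sum_qsh [in RHS]big_mkcond; congr (_ * _).
by apply: eq_bigr => g _; case: (_ == h).
Qed.
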